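(* Let $n \ge 2$ and let $\mathcal{A}$ be a non-degenerate deformation of the type $A_{n-1}$ Coxeter arrangement in $\mathbb{R}^n$. Let $H_0 \in \mathcal{A}$, say $H_0 : x_k - x_l = a$ with $k<l$. Then the restriction $\mathcal{A}^{H_0}$, viewed in $\mathbb{R}^{n-1}$ via the isomorphism $H_0 \to \mathbb{R}^{n-1}$ that deletes the coordinate $x_l$, is a non-degenerate deformation of the type $A_{n-2}$ Coxeter arrangement in $\mathbb{R}^{n-1}$.
   Context: A non-degenerate deformation of the type $A_{n-1}$ Coxeter arrangement in $\mathbb{R}^n$ is a finite hyperplane arrangement of the form $\{x_i-x_j = a_{ij}^{(1)},\ldots,a_{ij}^{(t_{ij})}\ |\ 1\le i \ne j \le n\}$ with all $a_{ij}^{(s)}\in\mathbb{R}$ and $t_{ij}\ge 1$, i.e. every hyperplane is parallel to some $x_i-x_j=0$ and for every pair $i\ne j$ there is at least one hyperplane of the form $x_i - x_j = c$. For $H_0 \in \mathcal{A}$, the restriction is the arrangement $\mathcal{A}^{H_0} = \{H_0 \cap H : H \in \mathcal{A}\setminus\{H_0\},\ H_0\cap H \neq \emptyset\}$ in the affine space $H_0$. *)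

From HB Require Import structures.
From mathcomp Require Import all_boot all_order all_algebra.
From mathcomp Require Import boolp classical_sets cardinality reals.
Set Implicit Arguments. Unset Strict Implicit. Unset Printing Implicit Defensive.
Import Order.TTheory GRing.Theory Num.Theory.
Local Open Scope ring_scope.
Local Open Scope classical_set_scope.

Definition hyp_diff (R : realType) (n : nat) (i j : 'I_n) (c : R)
  : set ('I_n -> R) := [set x | x i - x j = c].

Definition nondeg_deformation_A (R : realType) (n : nat)
  (A : set (set ('I_n -> R))) : Prop :=
  finite_set A /\
  (forall H, A H -> exists (i j : 'I_n) (c : R), i != j /\ H = hyp_diff i j c) /\
  (forall i j : 'I_n, i != j -> exists c : R, A (hyp_diff i j c)).

Definition del_coord (R : realType) (n : nat) (l : 'I_n) (x : 'I_n -> R)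
  : 'I_n.-1 -> R := fun j => x (lift l j).

Definition restriction_del (R : realType) (n : nat)
  (A : set (set ('I_n -> R))) (H0 : set ('I_n -> R)) (l : 'I_n)
  : set (set ('I_n.-1 -> R)) :=
  [set K | exists H, [/\ A H, H <> H0, (H0 `&` H) !=set0 &
                        K = del_coord l @` (H0 `&` H)]].

From HB Require Import structures.
From mathcomp Require Import all_boot all_order all_algebra.
From mathcomp Require Import boolp classical_sets cardinality reals.
From mathcomp Require Import ring.
Set Implicit Arguments. Unset Strict Implicit. Unset Printing Implicit Defensive.
Import Order.TTheory GRing.Theory Num.Theory.
Local Open Scope ring_scope.
Local Open Scope classical_set_scope.

(* Write H0 as x_(lift l k) - x_l = a.  Deleting x_l is a bijection from H0
   onto R^(n-1), with inverse y |-> (y with x_l := y_k - a), so the image of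
   H0 ∩ H is the preimage of H under this parametrization.  The preimage of
   x_i - x_j = c is again of the form y_i' - y_j' = c', where l is renamed k.
   It is degenerate (i' = j') only if {i, j} = {lift l k, l}, and then H0 ∩ H
   nonempty forces H = H0. *)

Section HypDiff.
Variables (R : realType) (n : nat).
Implicit Types (i j : 'I_n) (a c d : R).

Lemma hyp_diff_sym i j c : hyp_diff i j c = hyp_diff j i (- c).
Proof.
apply/funext=> x; apply/propext; rewrite /hyp_diff /= -[x j - x i]opprB.
by split=> [<- // | /oppr_inj].
Qed.

Lemma hyp_diff_meet_eq i j a c :
  (hyp_diff i j a `&` hyp_diff i j c) !=set0 -> hyp_diff i j c = hyp_diff i j a.
Proof. by move=> [x [/= Ha Hc]]; rewrite -Hc -Ha. Qed.

Lemma hyp_diff_point i j d :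
  i != j -> hyp_diff i j d (fun m => if m == i then d else 0).
Proof. by move=> ij; rewrite /hyp_diff /= eqxx eq_sym (negbTE ij) subr0. Qed.

Lemma hyp_diff_neqT i j c : i != j -> hyp_diff i j c <> setT.
Proof.
move=> ij HT; have Hc1 := hyp_diff_point (c + 1) ij.
have : hyp_diff i j c (fun m => if m == i then c + 1 else 0) by rewrite HT.
by rewrite /hyp_diff /= Hc1 => /eqP; rewrite -subr_eq0 addrC addKr oner_eq0.
Qed.

End HypDiff.

Section HypParam.
Variables (R : realType) (n : nat) (l : 'I_n) (k : 'I_n.-1) (a : R).

Definition squash_coord (m : 'I_n) : 'I_n.-1 := odflt k (unlift l m).

Definition hyp_param (y : 'I_n.-1 -> R) : 'I_n -> R :=
  fun m => y (squash_coord m) - (m == l)%:R * a.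

Local Notation H0 := (hyp_diff (lift l k) l a).

Lemma squash_coord_lift j : squash_coord (lift l j) = j.
Proof. by rewrite /squash_coord liftK. Qed.

Lemma squash_coord_eq i j : i != j -> squash_coord i = squash_coord j ->
  (i = l /\ j = lift l k) \/ (i = lift l k /\ j = l).
Proof.
rewrite /squash_coord.
case: (unliftP l i) => [i' ->|->]; case: (unliftP l j) => [j' ->|->] //=.
- by move=> ij eq_ij; case/eqP: ij; rewrite eq_ij.
- by move=> _ ->; right.
- by move=> _ <-; left.
- by rewrite eqxx.
Qed.

Lemma hyp_param_lift y j : hyp_param y (lift l j) = y j.
Proof.
by rewrite /hyp_param squash_coord_lift eq_sym (negbTE (neq_lift l j)) mul0r subr0.
Qed.

Lemma hyp_param_in y : H0 (hyp_param y).
Proof.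
rewrite /hyp_diff /= hyp_param_lift /hyp_param /squash_coord unlift_none eqxx.
by rewrite mul1r opprB addrC subrK.
Qed.

Lemma del_coord_param y : del_coord l (hyp_param y) = y.
Proof. by apply/funext=> j; rewrite /del_coord hyp_param_lift. Qed.

Lemma hyp_param_del_coord x : H0 x -> hyp_param (del_coord l x) = x.
Proof.
rewrite /hyp_diff /= => H0x; apply/funext=> m.
case: (unliftP l m) => [j ->|->]; first by rewrite hyp_param_lift.
rewrite /hyp_param /squash_coord unlift_none eqxx mul1r /del_coord -H0x.
by rewrite opprB addrC subrK.
Qed.

Lemma image_del_coord_meet (H : set ('I_n -> R)) :
  del_coord l @` (H0 `&` H) = hyp_param @^-1` H.
Proof.
apply/seteqP; split=> [_ [x [H0x Hx] <-] | y Hy] /=.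
  by rewrite hyp_param_del_coord.
by exists (hyp_param y); [split=> //; apply: hyp_param_in | apply: del_coord_param].
Qed.

Lemma preimage_hyp_param_diff i j c :
  hyp_param @^-1` hyp_diff i j c =
  hyp_diff (squash_coord i) (squash_coord j) (c + ((i == l)%:R - (j == l)%:R) * a).
Proof.
apply/funext=> y; apply/propext; rewrite /hyp_diff /hyp_param /=.
set d := (_ - _) * a.
have -> : y (squash_coord i) - (i == l)%:R * a - (y (squash_coord j) - (j == l)%:R * a)
          = y (squash_coord i) - y (squash_coord j) - d by rewrite /d; ring.
by split=> [<- | ->]; ring.
Qed.

End HypParam.

Section Restriction.
Variables (R : realType) (n : nat) (l : 'I_n) (k : 'I_n.-1) (a : R).

Local Notation H0 := (hyp_diff (lift l k) l a).

Lemma restriction_hyp_diff (i j : 'I_n) c :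
  i != j -> hyp_diff i j c <> H0 -> (H0 `&` hyp_diff i j c) !=set0 ->
  exists (i' j' : 'I_n.-1) (c' : R),
    i' != j' /\ del_coord l @` (H0 `&` hyp_diff i j c) = hyp_diff i' j' c'.
Proof.
move=> ij neq_H0 meet; rewrite image_del_coord_meet preimage_hyp_param_diff.
do 3 eexists; split; last reflexivity.
apply/eqP=> squash_ij; apply: neq_H0; move: meet.
have [[-> ->] | [-> ->]] := squash_coord_eq ij squash_ij; last exact: hyp_diff_meet_eq.
by rewrite [hyp_diff l _ c]hyp_diff_sym; apply: hyp_diff_meet_eq.
Qed.

Lemma restriction_lift_hyp_diff (i j : 'I_n.-1) c :
  i != j ->
  [/\ hyp_diff (lift l i) (lift l j) c <> H0,
      (H0 `&` hyp_diff (lift l i) (lift l j) c) !=set0 &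
      del_coord l @` (H0 `&` hyp_diff (lift l i) (lift l j) c) = hyp_diff i j c].
Proof.
move=> ij.
have preim : hyp_param l k a @^-1` hyp_diff (lift l i) (lift l j) c = hyp_diff i j c.
  by apply/seteqP; split=> y; rewrite /hyp_diff /= !hyp_param_lift.
split; last by rewrite image_del_coord_meet.
- move=> eq_H0; apply: (hyp_diff_neqT (c := c) ij); rewrite -preim eq_H0.
  by apply/seteqP; split=> // y _; apply: hyp_param_in.
- exists (hyp_param l k a (fun m => if m == i then c else 0)).
  by split; [apply: hyp_param_in | have := hyp_diff_point c ij; rewrite -preim].
Qed.

End Restriction.

Theorem lemma3p1 (R : realType) (n : nat) (A : set (set ('I_n -> R)))
  (k l : 'I_n) (a : R) :
  (2 <= n)%N ->
  nondeg_deformation_A A ->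
  (k < l)%N ->
  A (hyp_diff k l a) ->
  nondeg_deformation_A (restriction_del A (hyp_diff k l a) l).
Proof.
move=> _ [finA [formA coverA]] /ltn_eqF/negbT kl AH0.
have [k' ->] : exists k', k = lift l k'.
  by case: (unliftP l k) kl => [k' ->|->]; [exists k' | rewrite eqxx].
split; [|split].
- apply: (sub_finite_set _ (finite_image
    (fun H => del_coord l @` (hyp_diff (lift l k') l a `&` H)) finA)).
  by move=> _ [H [AH _ _ ->]]; exists H.
- move=> _ [H [AH neq_H0 meet ->]].
  have [i [j [c [ij eq_H]]]] := formA H AH; subst H.
  exact: restriction_hyp_diff.
- move=> i j ij.
  have [c Ac] : exists c, A (hyp_diff (lift l i) (lift l j) c).
    by apply: coverA; rewrite (inj_eq (@lift_inj _ l)).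
  have [neq_H0 meet eq_img] := restriction_lift_hyp_diff l k' a c ij.
  by exists c, (hyp_diff (lift l i) (lift l j) c).
Qed.
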